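(* For every integer $n\ge1$ and every $\eta>0$, $$\sup_{0\ne f\in\mathcal{T}_n(\eta)}\frac{|f'(0)|}{\|f\|_{[0,1]}} \ge 2(n-1)^2.$$
   Context: For $\eta>0$, $\mathcal{T}_n(\eta)$ denotes the set of all functions $f(t)=\sum_{j=1}^na_je^{i\lambda_jt}$ with $a_j\in\mathbb{C}$ and real $0<\lambda_1<\lambda_2<\cdots<\lambda_n<\eta$. $\|f\|_{[0,1]}:=\sup_{t\in[0,1]}|f(t)|$. *)

From Stdlib Require Import Reals.
Open Scope R_scope.

Fixpoint fsum (n : nat) (g : nat -> R) : R :=
  match n with
  | O => 0
  | S k => fsum k g + g k
  end.

Definition Cmod (z : R * R) : R := sqrt (fst z ^ 2 + snd z ^ 2).

(* The exponential sum f(t) = sum_{j<n} a_j e^{i lam_j t},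
   with a_j = ar j + i ai j, returned as (Re f(t), Im f(t)). *)
Definition expsum (n : nat) (lam ar ai : nat -> R) (t : R) : R * R :=
  (fsum n (fun j => ar j * cos (lam j * t) - ai j * sin (lam j * t)),
   fsum n (fun j => ar j * sin (lam j * t) + ai j * cos (lam j * t))).

Definition admissible_freqs (n : nat) (eta : R) (lam : nat -> R) : Prop :=
  (forall j, (j < n)%nat -> 0 < lam j < eta) /\
  (forall i j, (i < j)%nat -> (j < n)%nat -> lam i < lam j).

Definition sup_norm01 (f : R -> R * R) (M : R) : Prop :=
  is_lub (fun y => exists t, 0 <= t <= 1 /\ y = Cmod (f t)) M.

From Pilot Require Import Defs.
From Stdlib Require Import Reals Lra Lia Psatz.
From Coquelicot Require Coquelicot.
Open Scope R_scope.

(* The extremal sums come from the Chebyshev polynomial [T_m]. With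
   [u_d(t) = (e^{idt} - 1) / (id)], the function [f_d(t) = e^{idt} T_m(2 u_d(t) - 1)] is an
   exponential sum with frequencies [d, 2d, ..., (m+1)d], [f_d(0) = (-1)^m] and
   [f_d'(0) = (-1)^m (id - 2 m^2)], the term [2 m^2 = 2 |T_m'(-1)|] coming from [u_d'(0) = 1].
   Since [u_d(t) -> t] uniformly on [[0, 1]] as [d -> 0] and [|T_m| <= 1] on [[-1, 1]],
   [||f_d||_[0,1] <= 1 + O(d)], so [|f_d'(0)| / ||f_d||] tends to at least [2 m^2]. *)

Lemma x_sub_sin_bound (x : R) : 0 <= x <= 1 -> 0 <= x - sin x <= x ^ 2.
Proof.
  intros Hx. assert (PI / 2 > 1) by (generalize PI2_1; lra).
  destruct (sin_bound x 0) as [Hlow _]; try lra.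
  unfold sin_approx, sin_term in Hlow; simpl in Hlow; field_simplify in Hlow.
  split; [|nra].
  destruct (Req_dec x 0) as [->|Hx0]; [rewrite sin_0; lra|].
  assert (sin x < x) by (apply sin_lt_x; lra). lra.
Qed.

Lemma one_sub_cos_bound (x : R) : 0 <= x <= 1 -> 0 <= 1 - cos x <= x ^ 2.
Proof.
  intros Hx. assert (PI / 2 > 1) by (generalize PI2_1; lra).
  destruct (cos_bound x 0) as [Hlow _]; try lra.
  unfold cos_approx, cos_term in Hlow; simpl in Hlow; field_simplify in Hlow.
  destruct (COS_bound x). split; nra.
Qed.

Lemma cos_mul_acos_rec (k : nat) (x : R) : -1 <= x <= 1 ->
  cos (INR (S (S k)) * acos x) = 2 * x * cos (INR (S k) * acos x) - cos (INR k * acos x).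
Proof.
  intros Hx. set (th := acos x).
  assert (Hc : cos th = x) by (apply cos_acos; lra).
  replace (INR (S (S k)) * th) with (INR (S k) * th + th) by (rewrite (S_INR (S k)); ring).
  replace (INR k * th) with (INR (S k) * th - th) by (rewrite S_INR; ring).
  rewrite cos_plus, cos_minus, Hc. ring.
Qed.

Section ComplexTrigSums.

(* Imported only locally: Coquelicot's [Cmod] would shadow the one of [Defs]. *)
Import Coquelicot.Coquelicot.

Lemma derivable_pt_lim_cos_sin_comb (p q l x : R) :
  derivable_pt_lim (fun t => p * cos (l * t) - q * sin (l * t)) x
    (- l * (p * sin (l * x) + q * cos (l * x))).
Proof. apply is_derive_Reals. auto_derive; [easy|ring]. Qed.

Lemma derivable_pt_lim_sin_cos_comb (p q l x : R) :
  derivable_pt_lim (fun t => p * sin (l * t) + q * cos (l * t)) x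
    (l * (p * cos (l * x) - q * sin (l * x))).
Proof. apply is_derive_Reals. auto_derive; [easy|ring]. Qed.

Local Open Scope C_scope.

Ltac Ceq := apply injective_projections;
  cbn [fst snd Cplus Cmult Copp Cminus Cinv Cdiv RtoC Ci]; field.

Lemma Cmod_le_abs_add (x y : R) : Cmod (x, y) <= Rabs x + Rabs y.
Proof.
  unfold Cmod; simpl.
  rewrite <- (sqrt_Rsqr (Rabs x + Rabs y)) by (generalize (Rabs_pos x) (Rabs_pos y); lra).
  apply sqrt_le_1_alt. generalize (Rsqr_abs x) (Rsqr_abs y) (Rabs_pos x) (Rabs_pos y).
  unfold Rsqr. nra.
Qed.

Definition cexpi (x : R) : C := (cos x, sin x).

Lemma cexpi_add (x y : R) : cexpi (x + y) = cexpi x * cexpi y.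
Proof. unfold cexpi. rewrite cos_plus, sin_plus. Ceq. Qed.

Lemma Cmod_cexpi (x : R) : Cmod (cexpi x) = 1.
Proof.
  unfold Cmod, cexpi; simpl.
  replace (cos x * (cos x * 1) + sin x * (sin x * 1))%R with 1%R; [apply sqrt_1|].
  generalize (sin2_cos2 x). unfold Rsqr. lra.
Qed.

Fixpoint csum (N : nat) (g : nat -> C) : C :=
  match N with O => 0 | S k => csum k g + g k end.

Lemma csum_ext (N : nat) (f g : nat -> C) :
  (forall j, (j < N)%nat -> f j = g j) -> csum N f = csum N g.
Proof. induction N; intros H; simpl; auto. rewrite IHN, H by (auto with arith). reflexivity. Qed.

Lemma csum_plus (N : nat) (f g : nat -> C) :
  csum N (fun j => f j + g j) = csum N f + csum N g.
Proof. induction N; simpl; [|rewrite IHN]; Ceq. Qed.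

Lemma csum_mult_l (N : nat) (c : C) (f : nat -> C) :
  csum N (fun j => c * f j) = c * csum N f.
Proof. induction N; simpl; [|rewrite IHN]; Ceq. Qed.

Lemma csum_succ_l (N : nat) (f : nat -> C) :
  csum (S N) f = f O + csum N (fun j => f (S j)).
Proof. induction N; simpl in *; [|rewrite IHN]; Ceq. Qed.

Lemma csum_last_zero (N : nat) (f g : nat -> C) :
  (forall j, (j < N)%nat -> f j = g j) -> f N = 0 -> csum (S N) f = csum N g.
Proof. intros H H0. simpl. rewrite H0, (csum_ext N f g H). Ceq. Qed.

Lemma csum_nonzero_coef (N : nat) (a : nat -> C) :
  csum N a <> 0 -> exists j, (j < N)%nat /\ a j <> 0.
Proof.
  induction N as [|N IHN]; simpl; intros H; [congruence|].
  destruct (Ceq_dec (a N) 0) as [H0|H0]; [|exists N; auto].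
  destruct IHN as [j [? ?]]; [|exists j; auto].
  intros H1. apply H. rewrite H1, H0. Ceq.
Qed.

Definition freq (d : R) (j : nat) : R := d * INR (S j).

(* [g t = sum_{j<N} a_j e^{i (j+1) d t}]; [g0] and [dg0] are then [g 0] and [g' 0]. *)
Definition harmonic (d : R) (N : nat) (g : R -> C) (g0 dg0 : C) : Prop :=
  exists a : nat -> C,
    (forall t, g t = csum N (fun j => a j * cexpi (freq d j * t))) /\
    g0 = csum N a /\ dg0 = csum N (fun j => a j * (Ci * freq d j)).

Lemma harmonic_ext (d : R) (N : nat) (g h : R -> C) (g0 dg0 h0 dh0 : C) :
  (forall t, g t = h t) -> g0 = h0 -> dg0 = dh0 ->
  harmonic d N g g0 dg0 -> harmonic d N h h0 dh0.
Proof. intros Hg -> -> [a [Ha ?]]. exists a. split; auto. intros t. rewrite <- Hg. auto. Qed.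

Lemma harmonic_at0 (d : R) (N : nat) (g : R -> C) (g0 dg0 : C) :
  harmonic d N g g0 dg0 -> g 0%R = g0.
Proof.
  intros [a [Ha [-> _]]]. rewrite Ha. apply csum_ext. intros j _.
  unfold cexpi. rewrite Rmult_0_r, cos_0, sin_0. Ceq.
Qed.

Lemma harmonic_cexpi (d : R) : harmonic d 1 (fun t => cexpi (d * t)) 1 (Ci * d).
Proof.
  exists (fun _ => 1). unfold freq; simpl. rewrite Rmult_1_r.
  split; [intros t|split]; Ceq.
Qed.

Lemma harmonic_widen (d : R) (N : nat) (g : R -> C) (g0 dg0 : C) :
  harmonic d N g g0 dg0 -> harmonic d (S N) g g0 dg0.
Proof.
  intros [a [Ha [H0 H1]]].
  exists (fun j => if (j <? N)%nat then a j else 0).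
  assert (Hlt : forall j, (j < N)%nat -> (if (j <? N)%nat then a j else 0) = a j)
    by (intros j Hj; apply Nat.ltb_lt in Hj; rewrite Hj; reflexivity).
  split; [intros t; rewrite Ha|split; [rewrite H0|rewrite H1]]; symmetry;
    apply csum_last_zero; try (intros j Hj; rewrite Hlt by exact Hj; reflexivity);
    rewrite Nat.ltb_irrefl; Ceq.
Qed.

Lemma harmonic_plus (d : R) (N : nat) (g h : R -> C) (g0 dg0 h0 dh0 : C) :
  harmonic d N g g0 dg0 -> harmonic d N h h0 dh0 ->
  harmonic d N (fun t => g t + h t) (g0 + h0) (dg0 + dh0).
Proof.
  intros [a [Ha [-> ->]]] [b [Hb [-> ->]]]. exists (fun j => a j + b j).
  split; [intros t; rewrite Ha, Hb|split]; rewrite <- csum_plus; auto;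
    apply csum_ext; intros; Ceq.
Qed.

Lemma harmonic_scal (d : R) (N : nat) (c : C) (g : R -> C) (g0 dg0 : C) :
  harmonic d N g g0 dg0 -> harmonic d N (fun t => c * g t) (c * g0) (c * dg0).
Proof.
  intros [a [Ha [-> ->]]]. exists (fun j => c * a j).
  split; [intros t; rewrite Ha|split]; rewrite <- csum_mult_l; auto;
    apply csum_ext; intros; Ceq.
Qed.

Lemma harmonic_mul_cexpi (d : R) (N : nat) (g : R -> C) (g0 dg0 : C) :
  harmonic d N g g0 dg0 ->
  harmonic d (S N) (fun t => cexpi (d * t) * g t) g0 (dg0 + Ci * d * g0).
Proof.
  intros [a [Ha [-> ->]]].
  exists (fun j => match j with O => (0 : C) | S k => a k end).
  assert (Hfreq : forall j, freq d (S j) = (d + freq d j)%R)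
    by (intros j; unfold freq; rewrite (S_INR (S j)); ring).
  split; [intros t|split]; rewrite csum_succ_l; cbv beta iota;
    rewrite ?Cmult_0_l, Cplus_0_l.
  - rewrite Ha, <- csum_mult_l. apply csum_ext. intros j _.
    rewrite Hfreq, Rmult_plus_distr_r, cexpi_add. Ceq.
  - reflexivity.
  - rewrite <- csum_mult_l, <- csum_plus. apply csum_ext. intros j _.
    rewrite Hfreq. Ceq.
Qed.

Definition u (d t : R) : C := (cexpi (d * t) - 1) / (Ci * d).

Lemma harmonic_mul_u (d : R) (N : nat) (g : R -> C) (g0 dg0 : C) :
  d <> 0%R -> harmonic d N g g0 dg0 ->
  harmonic d (S N) (fun t => u d t * g t) 0 g0.
Proof.
  intros Hd Hg.
  pose proof (harmonic_scal d _ (-1) _ _ _ (harmonic_widen _ _ _ _ _ Hg)) as Hminus.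
  pose proof (harmonic_plus _ _ _ _ _ _ _ _ (harmonic_mul_cexpi _ _ _ _ _ Hg) Hminus) as Hdiff.
  eapply harmonic_ext; [| | |exact (harmonic_scal _ _ (/ (Ci * d)) _ _ _ Hdiff)];
    [intros t; unfold u, cexpi| |]; Ceq; auto.
Qed.

Lemma harmonic_mul_cheb_arg (d : R) (N : nat) (g : R -> C) (g0 dg0 : C) :
  d <> 0%R -> harmonic d N g g0 dg0 ->
  harmonic d (S N) (fun t => (2 * u d t - 1) * g t) (- g0) (2 * g0 - dg0).
Proof.
  intros Hd Hg.
  pose proof (harmonic_scal d _ 2 _ _ _ (harmonic_mul_u _ _ _ _ _ Hd Hg)) as Hu.
  pose proof (harmonic_scal d _ (-1) _ _ _ (harmonic_widen _ _ _ _ _ Hg)) as Hminus.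
  eapply harmonic_ext; [| | |exact (harmonic_plus _ _ _ _ _ _ _ _ Hu Hminus)];
    [intros t| |]; Ceq.
Qed.

Lemma Cmod_u_sub_le (d t : R) : 0 < d <= 1 -> 0 <= t <= 1 -> Cmod (u d t - t) <= 2 * d.
Proof.
  intros Hd Ht. assert (Hdt : 0 <= d * t <= 1) by nra.
  assert (Hq : forall q, 0 <= q <= (d * t) ^ 2 -> 0 <= q / d <= d).
  { intros q Hq0. split; [apply Rmult_le_pos; [lra|apply Rlt_le, Rinv_0_lt_compat; lra]|].
    apply Rmult_le_reg_r with d; [lra|]. unfold Rdiv. rewrite Rmult_assoc, Rinv_l by lra.
    assert (t * t <= 1) by nra. nra. }
  replace (u d t - t) with (((sin (d * t) - d * t) / d)%R, ((1 - cos (d * t)) / d)%R)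
    by (unfold u, cexpi; Ceq; lra).
  eapply Rle_trans; [apply Cmod_le_abs_add|].
  destruct (Hq _ (x_sub_sin_bound _ Hdt)), (Hq _ (one_sub_cos_bound _ Hdt)).
  rewrite Rabs_left1, Rabs_right; unfold Rdiv in *; lra.
Qed.

Fixpoint cheb (k : nat) (w : C) : C :=
  match k with
  | O => 1
  | S k' => match k' with O => w | S k'' => 2 * w * cheb k' w - cheb k'' w end
  end.

(* [cos (k acos x)] is [T_k x] on [[-1, 1]]. *)
Lemma cheb_sub_cos_le (k : nat) : exists K, 0 <= K /\
  forall (x : R) (w : C), -1 <= x <= 1 -> Cmod (w - x) <= 1 ->
    Cmod (cheb k w - cos (INR k * acos x)) <= K * Cmod (w - x).
Proof.
  set (P k := exists K, 0 <= K /\ forall (x : R) (w : C), -1 <= x <= 1 -> Cmod (w - x) <= 1 ->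
    Cmod (cheb k w - cos (INR k * acos x)) <= K * Cmod (w - x)).
  enough (HP : P k /\ P (S k)) by apply HP.
  induction k as [|k [[K0 [HK0 H0]] [K1 [HK1 H1]]]].
  - split; [exists 0|exists 1]; split; try lra; intros x w Hx Hw; simpl.
    + rewrite Rmult_0_l, cos_0. replace (1 - 1) with (RtoC 0) by Ceq.
      rewrite Cmod_0. lra.
    + rewrite Rmult_1_l, cos_acos by lra. lra.
  - split; [exists K1; auto|].
    exists (4 * K1 + 2 + K0)%R. split; [lra|]. intros x w Hx Hw.
    set (c1 := cos (INR (S k) * acos x)).
    assert (Hdiff : cheb (S (S k)) w - cos (INR (S (S k)) * acos x)
      = 2 * w * (cheb (S k) w - c1) + 2 * c1 * (w - x) - (cheb k w - cos (INR k * acos x))).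
    { rewrite cos_mul_acos_rec by exact Hx. unfold c1. simpl cheb. Ceq. }
    assert (H2w : Cmod (2 * w) <= 4).
    { replace (2 * w) with (2 * (w - x) + RtoC (2 * x)) by Ceq.
      eapply Rle_trans; [apply Cmod_triangle|].
      rewrite Cmod_mult, !Cmod_R, Rabs_mult, (Rabs_right 2) by lra.
      assert (Rabs x <= 1) by (apply Rabs_le; lra). lra. }
    assert (Hc1 : Cmod (2 * c1) <= 2).
    { rewrite Cmod_mult, !Cmod_R, (Rabs_right 2) by lra.
      assert (Rabs c1 <= 1) by (apply Rabs_le, COS_bound). lra. }
    rewrite Hdiff. unfold Cminus at 1.
    eapply Rle_trans; [apply Cmod_triangle|]. rewrite Cmod_opp.
    eapply Rle_trans; [apply Rplus_le_compat_r, Cmod_triangle|].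
    rewrite Cmod_mult.
    specialize (H0 x w Hx Hw). specialize (H1 x w Hx Hw). fold c1 in H1.
    assert (Cmod (2 * w) * Cmod (cheb (S k) w - c1) <= 4 * (K1 * Cmod (w - x)))
      by (apply Rmult_le_compat; auto using Cmod_ge_0).
    assert (Cmod (2 * c1 * (w - x)) <= 2 * Cmod (w - x))
      by (rewrite Cmod_mult; apply Rmult_le_compat_r; auto using Cmod_ge_0).
    lra.
Qed.

Definition extremal (d : R) (k : nat) (t : R) : C := cexpi (d * t) * cheb k (2 * u d t - 1).

Lemma harmonic_extremal (d : R) (k : nat) : d <> 0%R ->
  harmonic d (S k) (extremal d k) ((-1) ^ k)%R (((-1) ^ k)%R * (Ci * d - 2 * (INR k ^ 2)%R)).
Proof.
  intros Hd.
  enough (H : harmonic d (S k) (extremal d k) ((-1) ^ k)%R (((-1) ^ k)%R * (Ci * d - 2 * (INR k ^ 2)%R)) /\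
    harmonic d (S (S k)) (extremal d (S k)) ((-1) ^ S k)%R
      (((-1) ^ S k)%R * (Ci * d - 2 * (INR (S k) ^ 2)%R))) by apply H.
  induction k as [|k [H0 H1]].
  - pose proof (harmonic_cexpi d) as He. split.
    + eapply harmonic_ext; [| | |exact He]; [intros t; unfold extremal| |]; simpl; Ceq.
    + eapply harmonic_ext; [| | |exact (harmonic_mul_cheb_arg _ _ _ _ _ Hd He)];
        [intros t; unfold extremal| |]; simpl; Ceq.
  - split; [exact H1|].
    pose proof (harmonic_scal d _ 2 _ _ _ (harmonic_mul_cheb_arg _ _ _ _ _ Hd H1)) as Hnext.
    pose proof (harmonic_scal d _ (-1) _ _ _ (harmonic_widen _ _ _ _ _ (harmonic_widen _ _ _ _ _ H0)))
      as Hprev.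
    eapply harmonic_ext; [| | |exact (harmonic_plus _ _ _ _ _ _ _ _ Hnext Hprev)].
    + intros t. unfold extremal. simpl cheb. Ceq.
    + simpl pow. Ceq.
    + rewrite !S_INR. simpl pow. Ceq.
Qed.

Lemma Cmod_extremal_le (k : nat) : exists K, 0 <= K /\
  forall d t, 0 < d <= 1/4 -> 0 <= t <= 1 -> Cmod (extremal d k t) <= 1 + K * d.
Proof.
  destruct (cheb_sub_cos_le k) as [K [HK Hcheb]].
  exists (4 * K)%R. split; [lra|]. intros d t Hd Ht.
  set (x := (2 * t - 1)%R). set (w := 2 * u d t - 1).
  assert (Hwx : Cmod (w - x) <= 4 * d).
  { replace (w - x) with (2 * (u d t - t)) by (unfold w, x; Ceq).
    rewrite Cmod_mult, Cmod_R, Rabs_right by lra.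
    pose proof (Cmod_u_sub_le d t ltac:(lra) Ht). lra. }
  assert (Hx : -1 <= x <= 1) by (unfold x; lra).
  specialize (Hcheb x w Hx ltac:(lra)).
  unfold extremal. fold w. rewrite Cmod_mult, Cmod_cexpi, Rmult_1_l.
  replace (cheb k w) with (cheb k w - cos (INR k * acos x) + cos (INR k * acos x)) by Ceq.
  eapply Rle_trans; [apply Cmod_triangle|]. rewrite Cmod_R.
  assert (Rabs (cos (INR k * acos x)) <= 1) by (apply Rabs_le, COS_bound).
  assert (K * Cmod (w - x) <= K * (4 * d)) by (apply Rmult_le_compat_l; lra).
  lra.
Qed.

Lemma expsum_csum (N : nat) (lam : nat -> R) (a : nat -> C) (t : R) :
  expsum N lam (fun j => fst (a j)) (fun j => snd (a j)) t
  = csum N (fun j => a j * cexpi (lam j * t)).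
Proof.
  induction N; [reflexivity|]. unfold expsum in *. simpl. rewrite <- IHN. unfold cexpi. Ceq.
Qed.

Lemma derivable_pt_lim_expsum (N : nat) (lam : nat -> R) (a : nat -> C) (x : R) :
  derivable_pt_lim (fun t => fst (expsum N lam (fun j => fst (a j)) (fun j => snd (a j)) t)) x
    (fst (csum N (fun j => a j * (Ci * lam j) * cexpi (lam j * x)))) /\
  derivable_pt_lim (fun t => snd (expsum N lam (fun j => fst (a j)) (fun j => snd (a j)) t)) x
    (snd (csum N (fun j => a j * (Ci * lam j) * cexpi (lam j * x)))).
Proof.
  induction N as [|N [IHfst IHsnd]]; [split; apply derivable_pt_lim_const|].
  pose proof (derivable_pt_lim_plus _ _ x _ _ IHfst
    (derivable_pt_lim_cos_sin_comb (fst (a N)) (snd (a N)) (lam N) x)) as Hfst.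
  pose proof (derivable_pt_lim_plus _ _ x _ _ IHsnd
    (derivable_pt_lim_sin_cos_comb (fst (a N)) (snd (a N)) (lam N) x)) as Hsnd.
  split; [refine (eq_ind _ (derivable_pt_lim _ x) Hfst _ _)
         |refine (eq_ind _ (derivable_pt_lim _ x) Hsnd _ _)];
    unfold cexpi; simpl; ring.
Qed.

Lemma expsum_extremal (m : nat) (d : R) : d <> 0%R ->
  exists (a : nat -> C) (D : C),
    let f := expsum (S m) (freq d) (fun j => fst (a j)) (fun j => snd (a j)) in
    (forall t, f t = extremal d m t) /\
    (exists j, (j < S m)%nat /\ (fst (a j) <> 0%R \/ snd (a j) <> 0%R)) /\
    derivable_pt_lim (fun t => fst (f t)) 0 (fst D) /\
    derivable_pt_lim (fun t => snd (f t)) 0 (snd D) /\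
    Cmod (f 0%R) = 1 /\ 2 * INR m ^ 2 <= Cmod D.
Proof.
  intros Hd. pose proof (harmonic_extremal d m Hd) as Hh.
  pose proof (harmonic_at0 _ _ _ _ _ Hh) as Hat0.
  destruct Hh as (a & Ha & Hval & Hder).
  exists a, (csum (S m) (fun j => a j * (Ci * freq d j) * cexpi (freq d j * 0))).
  intros f.
  assert (Hf : forall t, f t = extremal d m t) by (intros t; unfold f; rewrite expsum_csum; auto).
  assert (Hsign : Cmod ((-1) ^ m)%R = 1) by (rewrite Cmod_R; apply pow_1_abs).
  repeat split; try apply derivable_pt_lim_expsum; auto.
  - assert (Ha0 : csum (S m) a <> 0) by (rewrite <- Hval; intros H0; rewrite H0, Cmod_0 in Hsign; lra).
    destruct (csum_nonzero_coef _ _ Ha0) as (j & Hj & Haj).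
    exists j. split; auto. destruct (a j) as [p q].
    destruct (Req_dec p 0), (Req_dec q 0); subst; auto.
  - rewrite Hf, Hat0. exact Hsign.
  - rewrite (csum_ext _ _ (fun j => a j * (Ci * freq d j))), <- Hder
      by (intros j _; rewrite Rmult_0_r; unfold cexpi; rewrite cos_0, sin_0; Ceq).
    rewrite Cmod_mult, Hsign, Rmult_1_l.
    eapply Rle_trans; [|apply Rmax_Cmod]. eapply Rle_trans; [|apply Rmax_l]. simpl.
    rewrite Rabs_left1; [lra|]. generalize (pow2_ge_0 (INR m)). lra.
Qed.

End ComplexTrigSums.

Lemma freq_admissible (n : nat) (eta d : R) :
  0 < d -> d * INR n < eta -> admissible_freqs n eta (freq d).
Proof.
  intros Hd Hn. unfold freq. split.
  - intros j Hj. assert (0 < INR (S j) <= INR n) by (split; [apply lt_0_INR|apply le_INR]; lia).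
    split; nra.
  - intros i j Hij _. apply Rmult_lt_compat_l; [lra|apply lt_INR; lia].
Qed.

Lemma sup_norm01_exists (f : R -> R * R) (B : R) :
  (forall t, 0 <= t <= 1 -> Cmod (f t) <= B) ->
  exists M, sup_norm01 f M /\ Cmod (f 0) <= M <= B.
Proof.
  intros Hf.
  set (S := fun y => exists t, 0 <= t <= 1 /\ y = Cmod (f t)).
  destruct (completeness S) as [M HM].
  - exists B. intros y (t & Ht & ->). auto.
  - exists (Cmod (f 0)), 0. split; [lra|auto].
  - exists M. split; [exact HM|split].
    + apply HM. exists 0. split; [lra|auto].
    + apply HM. intros y (t & Ht & ->). auto.
Qed.

Lemma mul_lt_of_le_div (d b r : R) : 0 < d -> 0 <= b -> d <= r / (b + 1) -> d * b < r.
Proof.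
  intros Hd Hb H. apply Rmult_le_compat_r with (r := b + 1) in H; [|lra].
  replace (r / (b + 1) * (b + 1)) with r in H by (field; lra). nra.
Qed.

Lemma exists_small_pos (b c r s : R) :
  0 <= b -> 0 <= c -> 0 < r -> 0 < s -> exists d, 0 < d <= 1/4 /\ d * b < r /\ d * c < s.
Proof.
  intros Hb Hc Hr Hs.
  exists (Rmin (1/4) (Rmin (r / (b + 1)) (s / (c + 1)))).
  assert (0 < r / (b + 1)) by (apply Rdiv_lt_0_compat; lra).
  assert (0 < s / (c + 1)) by (apply Rdiv_lt_0_compat; lra).
  assert (Hd : 0 < Rmin (1/4) (Rmin (r / (b + 1)) (s / (c + 1)))) by (repeat apply Rmin_pos; lra).
  repeat split; try apply mul_lt_of_le_div; auto using Rmin_l.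
  - eapply Rle_trans; [apply Rmin_r|apply Rmin_l].
  - eapply Rle_trans; [apply Rmin_r|apply Rmin_r].
Qed.

Lemma sub_lt_div (A D M y eps : R) :
  0 <= A -> A <= D -> 1 <= M <= 1 + y -> A * y < eps -> A - eps < D / M.
Proof.
  intros HA HAD HM Hy. apply Rmult_lt_reg_r with M; [lra|].
  unfold Rdiv. rewrite Rmult_assoc, Rinv_l, Rmult_1_r by lra.
  assert (0 <= A * y) by nra.
  destruct (Rle_lt_dec A eps).
  - assert ((A - eps) * (M - 1) <= 0) by nra. nra.
  - assert ((A - eps) * M <= (A - eps) * (1 + y)) by (apply Rmult_le_compat_l; lra). nra.
Qed.

Theorem theorem9p2 (n : nat) (eta : R) :
  (1 <= n)%nat -> 0 < eta ->
  forall eps : R, 0 < eps ->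
  exists (lam ar ai : nat -> R) (dr di M : R),
    admissible_freqs n eta lam /\
    (exists j, (j < n)%nat /\ (ar j <> 0 \/ ai j <> 0)) /\
    derivable_pt_lim (fun t => fst (expsum n lam ar ai t)) 0 dr /\
    derivable_pt_lim (fun t => snd (expsum n lam ar ai t)) 0 di /\
    sup_norm01 (expsum n lam ar ai) M /\
    0 < M /\
    2 * (INR n - 1) ^ 2 - eps < Cmod (dr, di) / M.
Proof.
  intros Hn Heta eps Heps. destruct n as [|m]; [lia|].
  destruct (Cmod_extremal_le m) as (K & HK & Hbound).
  set (A := 2 * INR m ^ 2). assert (HA : 0 <= A) by (unfold A; nra).
  destruct (exists_small_pos (INR (S m)) (A * K) eta eps) as (d & Hd & Hfreq & Hsmall);
    auto using pos_INR, Rmult_le_pos.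
  destruct (expsum_extremal m d) as (a & D & Hf & Hcoef & Hdr & Hdi & Hf0 & HD); [lra|].
  destruct (sup_norm01_exists (expsum (S m) (freq d) (fun j => fst (a j)) (fun j => snd (a j)))
    (1 + K * d)) as (M & HM & HM0 & HMB).
  { intros t Ht. rewrite Hf. exact (Hbound d t Hd Ht). }
  assert (HM1 : 1 <= M) by (rewrite <- Hf0; exact HM0).
  exists (freq d), (fun j => fst (a j)), (fun j => snd (a j)), (fst D), (snd D), M.
  split; [apply freq_admissible; lra|].
  do 4 (split; [assumption|]). split; [lra|].
  rewrite S_INR, Rplus_minus_r, <- surjective_pairing.
  apply sub_lt_div with (y := K * d); [exact HA|exact HD|lra|].
  rewrite <- Rmult_assoc, Rmult_comm. exact Hsmall.
Qed.
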